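(* Let $k\ge2$, $n>2^k$ and $c=2^k-2$. For every $v\in V\setminus\{1\}$ there exists a search strategy $T_v\in\mathcal{T}_k$ with $$C(T_v)=\begin{cases}[v\oplus(c+1)]&\text{if }\{0,n-1\}\cap[v\oplus(c+1)]\neq\emptyset,\\ [v\oplus c]&\text{otherwise.}\end{cases}$$
   Context: $G$ is the path graph with $V=\{0,\dots,n-1\}$ and edges $\{v,v+1\}$. A search strategy for a tree $H$ is a rooted binary tree defined recursively: a single node is a search strategy for any $H$; otherwise the root is labeled with an edge $uv$ of $H$ and its two child subtrees are search strategies for the components $H_u,H_v$ of $H-uv$ containing $u,v$. Nodes get vertex sets: the root gets $V(H)$, the children of a root labeled $uv$ get $V(H_u),V(H_v)$, recursively. $C(T)$ is the set of $v$ with $V(\lambda)=\{v\}$ for a leaf $\lambda$. $\mathcal{T}_k$ is the set of search strategies for $G$ of height at most $k$. $[u\oplus\ell]=\{w\bmod n: u\le w\le u+\ell-1\}$. *)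

From mathcomp Require Import all_boot.
Set Implicit Arguments. Unset Strict Implicit. Unset Printing Implicit Defensive.

(* Path graph G on V = {0,...,n-1}, edges {u,u+1}.  Every component arising
   from G by deleting edges is a subpath on an interval of vertices [a..b];
   we identify such a subtree H with the pair (a,b).  The edge {u,u+1} is
   recorded by its smaller endpoint u. *)

(* Rooted binary trees whose internal nodes are labelled by edges. *)
Inductive strat : Type :=
| Leaf : strat
| Node : nat -> strat -> strat -> strat.

(* [is_strat a b T]: T is a search strategy for the subpath on [a..b].
   A node labelled by edge {u,u+1} (a <= u < b) splits H into H_u = [a..u]
   and H_{u+1} = [u+1..b]. *)
Fixpoint is_strat (a b : nat) (T : strat) : bool :=
  match T with
  | Leaf => true
  | Node u l r => [&& a <= u, u < b, is_strat a u l & is_strat u.+1 b r]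
  end.

(* Height: a single node has height 0. *)
Fixpoint height (T : strat) : nat :=
  match T with
  | Leaf => 0
  | Node _ l r => (maxn (height l) (height r)).+1
  end.

(* C(T) for T a strategy of the subpath [a..b]: vertices v such that some
   leaf has vertex set {v}. *)
Fixpoint Cset (a b : nat) (T : strat) : seq nat :=
  match T with
  | Leaf => if a == b then [:: a] else [::]
  | Node u l r => Cset a u l ++ Cset u.+1 b r
  end.

(* T in T_k: search strategy for G (root vertex set V = [0..n-1]) of height <= k. *)
Definition in_Tk (n k : nat) (T : strat) : bool :=
  is_strat 0 n.-1 T && (height T <= k).

Definition circ (n u l : nat) : seq nat := [seq (u + i) %% n | i <- iota 0 l].

From mathcomp Require Import all_boot.
From mathcomp Require Import zify.

(* Cutting a set s of edges of the path [a..b] leaves w as a singleton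
   component iff the edges on both sides of w are cut (or w is an end of the
   path).  Bisecting recursively at the median cut realises the cuts s by a
   strategy of height at most k whenever |s| < 2^k, and its leaves are exactly
   these isolated vertices.  So it suffices to find c + 1 = 2^k - 1 cuts
   isolating the window: the edges v-1, ..., v+c-1 around [v, v+c-1] (for
   v = 0 they isolate [0, c]; v <> 1 keeps the vertex 0 from being isolated
   too), or, when the window wraps past n-1, the edges 0, ..., v+c-n together
   with v-1, ..., n-2. *)

Definition cut_seq (a b : nat) (s : seq nat) : bool :=
  pairwise ltn s && all (fun u => a <= u < b) s.

Definition isolated (a b : nat) (s : seq nat) (w : nat) : bool :=
  [&& a <= w <= b, (w == a) || (w.-1 \in s) & (w == b) || (w \in s)].

Fixpoint bisect (fuel a b : nat) (s : seq nat) : strat :=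
  match fuel, s with
  | f.+1, _ :: _ =>
    let m := (size s)./2 in
    let u := nth 0 s m in
    Node u (bisect f a u (take m s)) (bisect f u.+1 b (drop m.+1 s))
  | _, _ => Leaf
  end.

Lemma bisect_cons f a b x0 s0 : exists x u y,
  [/\ bisect f.+1 a b (x0 :: s0) = Node u (bisect f a u x) (bisect f u.+1 b y),
      x0 :: s0 = x ++ u :: y,
      size x <= (size s0).+1./2 & size y <= (size s0).+1./2].
Proof.
set s := x0 :: s0; set m := (size s)./2.
have m_lt : m < size s by rewrite /m /s /=; lia.
exists (take m s), (nth 0 s m), (drop m.+1 s); split=> //.
- by rewrite -drop_nth // cat_take_drop.
- by rewrite size_take m_lt.
- by rewrite size_drop /m /s /=; lia.
Qed.

Lemma cut_seq_cat_cons a b x u y : cut_seq a b (x ++ u :: y) ->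
  [/\ cut_seq a u x, cut_seq u.+1 b y, a <= u < b,
      {in x, forall z, z < u} & {in y, forall z, u < z}].
Proof.
rewrite /cut_seq pairwise_cat pairwise_cons all_cat /=.
case/andP=> /and4P[/allrelP x_lt_u x_inc u_lt_y y_inc] /and3P[x_ab u_ab y_ab].
have x_lt z : z \in x -> z < u by move=> zx; apply: x_lt_u; rewrite ?mem_head.
have y_gt z : z \in y -> u < z by move=> zy; apply: (allP u_lt_y).
split=> //.
- rewrite x_inc; apply/allP=> z zx; have /andP[-> _] := allP x_ab z zx; exact: x_lt.
- rewrite y_inc; apply/allP=> z zy; have /andP[_ ->] := allP y_ab z zy.
  by rewrite andbT; exact: y_gt.
Qed.

Lemma mem_Cset_Leaf a b w : (w \in Cset a b Leaf) = isolated a b [::] w.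
Proof.
by rewrite /isolated /= !orbF; case: (eqVneq a b) => [<-|ab]; rewrite ?inE ?in_nil; lia.
Qed.

(* Vertices left of the cut u only see the cuts in x, those right of it only
   the cuts in y. *)
Lemma isolated_cat_cons a b x u y w : cut_seq a b (x ++ u :: y) ->
  isolated a b (x ++ u :: y) w = isolated a u x w || isolated u.+1 b y w.
Proof.
case/cut_seq_cat_cons=> _ _ /andP[au ub] x_lt y_gt.
rewrite /isolated !mem_cat !inE.
have [uw|wu] := ltnP u w.
- have /negPf-> : w \notin x by apply/negP=> /x_lt; lia.
  have /negPf-> : w.-1 \notin x by apply/negP=> /x_lt; lia.
  by case: (w \in y); case: (w.-1 \in y); lia.
- have /negPf-> : w \notin y by apply/negP=> /y_gt; lia.
  have /negPf-> : w.-1 \notin y by apply/negP=> /y_gt; lia.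
  by case: (w \in x); case: (w.-1 \in x); lia.
Qed.

Lemma is_strat_bisect f a b s : cut_seq a b s -> is_strat a b (bisect f a b s).
Proof.
elim: f a b s => [|f IH] a b [|x0 s0] //.
have [x [u [y [-> s_eq _ _]]]] := bisect_cons f a b x0 s0.
by rewrite s_eq; case/cut_seq_cat_cons=> cx cy /andP[au ub] _ _; rewrite /= au ub !IH.
Qed.

Lemma mem_Cset_bisect f a b s w : size s <= f -> cut_seq a b s ->
  (w \in Cset a b (bisect f a b s)) = isolated a b s w.
Proof.
elim: f a b s => [|f IH] a b [|x0 s0] s_le; rewrite ?mem_Cset_Leaf //.
have [x [u [y [-> s_eq x_le y_le]]]] := bisect_cons f a b x0 s0.
rewrite s_eq => cs; have [cx cy _ _ _] := cut_seq_cat_cons _ _ _ _ _ cs.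
by rewrite isolated_cat_cons //= mem_cat !IH //; move: s_le => /=; lia.
Qed.

Lemma height_bisect f a b s h : size s < 2 ^ h -> height (bisect f a b s) <= h.
Proof.
elim: f a b s h => [|f IH] a b [|x0 s0] h // s_lt.
have [x [u [y [-> _ x_le y_le]]]] := bisect_cons f a b x0 s0.
case: h s_lt => [|h]; first by rewrite expn0.
rewrite expnS /= ltnS geq_max => s_lt.
by rewrite !IH //; lia.
Qed.

Lemma strat_of_cuts n k s (P : pred nat) :
  cut_seq 0 n.-1 s -> size s < 2 ^ k -> isolated 0 n.-1 s =1 P ->
  exists T, in_Tk n k T /\ forall w, (w \in Cset 0 n.-1 T) = P w.
Proof.
move=> cs s_lt isoP; exists (bisect (size s) 0 n.-1 s); split.
- by rewrite /in_Tk is_strat_bisect // height_bisect.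
- by move=> w; rewrite mem_Cset_bisect.
Qed.

Lemma cut_seq_iota a b u l : a <= u -> u + l <= b -> cut_seq a b (iota u l).
Proof.
move=> au ulb; rewrite /cut_seq -sorted_pairwise; last exact: ltn_trans.
by rewrite iota_ltn_sorted; apply/allP=> z; rewrite mem_iota; lia.
Qed.

Lemma cut_seq_cat a b x y : cut_seq a b x -> cut_seq a b y ->
  {in x & y, forall p q, p < q} -> cut_seq a b (x ++ y).
Proof.
rewrite /cut_seq pairwise_cat all_cat => /andP[-> ->] /andP[-> ->] x_lt_y.
by rewrite !andbT; apply/allrelP.
Qed.

Lemma mem_circ n v l w : v < n -> l <= n -> (w \in circ n v l) =
  (w < n) && ((v <= w < v + l) || (w + n < v + l)).
Proof.
move=> vn ln; apply/mapP/idP.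
  case=> i; rewrite mem_iota add0n => il ->.
  have [vi_lt|vi_ge] := ltnP (v + i) n; first by rewrite modn_small //; lia.
  have -> : v + i = (v + i - n) + n by lia.
  by rewrite modnDr modn_small; lia.
case/andP=> wn /orP[/andP[vw wl]|wnl].
  by exists (w - v); rewrite ?mem_iota ?modn_small; lia.
exists (w + n - v); first by rewrite mem_iota; lia.
have -> : v + (w + n - v) = w + n by lia.
by rewrite modnDr modn_small.
Qed.

Theorem corollary3p1 (k n : nat) (hk : 2 <= k) (hn : 2 ^ k < n) (v : nat)
  (hv : v < n) (hv1 : v != 1) :
  let c := 2 ^ k - 2 in
  exists T : strat, in_Tk n k T /\
    (forall w : nat, w \in Cset 0 n.-1 T =
       if (0 \in circ n v c.+1) || (n.-1 \in circ n v c.+1)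
       then w \in circ n v c.+1 else w \in circ n v c).
Proof.
move=> c; have c_def : c = 2 ^ k - 2 by []; clearbody c.
have four_le : 4 <= 2 ^ k by rewrite -[4]/(2 ^ 2) leq_exp2l.
have c_le : c <= n by lia.
have c1_le : c.+1 <= n by lia.
have [v_wrap|v_fits] := leqP n.-1 (v + c).
- apply: (@strat_of_cuts n k (iota 0 (v + c + 1 - n) ++ iota v.-1 (n - v))).
  + apply: cut_seq_cat; try (apply: cut_seq_iota; lia).
    by move=> p q; rewrite !mem_iota; lia.
  + by rewrite size_cat !size_iota; lia.
  + by move=> w; rewrite /isolated !mem_cat !mem_iota !mem_circ //; case: ifP; lia.
- apply: (@strat_of_cuts n k (iota v.-1 c.+1)).
  + by apply: cut_seq_iota; lia.
  + by rewrite size_iota; lia.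
  + by move=> w; rewrite /isolated !mem_iota !mem_circ //; case: ifP; lia.
Qed.
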